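(* Assume that the kinetic system $(\Omega, \mathcal R, \mathcal K)$ satisfies the detailed balance property. Let $U \subset \Omega$ and $V := \Omega \setminus U$. Consider the reduced kinetic system $(V, \mathcal R_V, \mathcal K[n_U])$ where $n_U := \{n_s\}_{s \in U}$ with $n_s > 0$ for every $s \in U$. 1. If $U \cap \mathcal D(\mathcal C_V) = \emptyset$, then $(V, \mathcal R_V, \mathcal K[n_U])$ satisfies the detailed balance property. 2. If $U \cap \mathcal D(\mathcal C_V) \neq \emptyset$ and $n_s = e^{-E(s)}$ for all $s \in U \cap \mathcal D(\mathcal C_V)$, for an energy $E \in \mathbb R^N$ of the kinetic system $(\Omega, \mathcal R, \mathcal K)$, then $(V, \mathcal R_V, \mathcal K[n_U])$ satisfies the detailed balance property.
   Context: A chemical network $(\Omega,\mathcal R)$ has substances $\Omega=\{1,\dots,N\}$ and reactions $\mathcal R\subset \mathbb Z^N\setminus\{0\}$; for $R\in\mathcal R$, $I(R)=\{i: R(i)<0\}$, $F(R)=\{i:R(i)>0\}$. It is bidirectional if $R\in\mathcal R$ implies $-R\in\mathcal R$; $\mathcal R_s$ contains one representative of each pair $\{R,-R\}$, and $\textbf{R}\in\mathbb Z^{N\times|\mathcal R_s|}$ is the matrix whose columns are the reactions in $\mathcal R_s$. The space of cycles is $\mathcal C=\ker \textbf{R}$. A kinetic system $(\Omega,\mathcal R,\mathcal K)$ is a bidirectional network with rates $K_R=\mathcal K(R)>0$ (mass action kinetics). It satisfies the detailed balance property if there is $\overline N\in\mathbb R_+^N$ with $K_R\prod_{i\in I(R)}\overline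 N_i^{-R(i)}=K_{-R}\prod_{i\in F(R)}\overline N_i^{R(i)}$ for all $R\in\mathcal R_s$. An energy of $(\Omega,\mathcal R,\mathcal K)$ is any solution $E\in\mathbb R^N$ of $\textbf{R}^T E=w$, where $w(i)=\log(K_{-R_i}/K_{R_i})$ for the columns $R_i$ of $\textbf{R}$. Reduction: for $U\subset\Omega$ nonempty, $V=\Omega\setminus U$, $\pi_V$ denotes projection onto the coordinates in $V$; the reduced reactions are $\mathcal R_V=\{\pi_V \overline R\neq 0:\overline R\in\mathcal R\}$, with reaction matrix $\textbf{R}_V$ and space of cycles $\mathcal C_V=\ker\textbf{R}_V$; the reduced rates are $\mathcal K[n_U](R)=\sum_{\overline R\in\mathcal R:\ \pi_V\overline R=R} K_{\overline R}\prod_{s\in U\cap I(\overline R)} n_s^{-\overline R(s)}$. Finally $\mathcal D(\mathcal C_V):=\{i\in\Omega: \exists R\in\mathcal R \text{ such that } \pi_V R \text{ belongs to a cycle in } \mathcal C_V \text{ and } R(i)\neq 0\}$. *)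

From HB Require Import structures.
From mathcomp Require Import all_boot all_order all_algebra.
From mathcomp Require Import reals sequences exp.

Set Implicit Arguments.
Unset Strict Implicit.
Unset Printing Implicit Defensive.

Import Order.TTheory GRing.Theory Num.Theory.
Local Open Scope ring_scope.

Definition rxn (T : finType) := {ffun T -> int}.

Definition reactants (T : finType) (R : rxn T) : {set T} := [set i | R i < 0].
Definition products (T : finType) (R : rxn T) : {set T} := [set i | 0 < R i].

Definition bidirectional_network (T : finType) (Rs : seq (rxn T)) : Prop :=
  [/\ uniq Rs, 0 \notin Rs & forall R, R \in Rs -> - R \in Rs].

Definition kinetic_system (K : realType) (T : finType) (Rs : seq (rxn T))
  (k : rxn T -> K) : Prop :=
  bidirectional_network Rs /\ (forall R, R \in Rs -> 0 < k R).

Definition representatives (T : finType) (Rs Rss : seq (rxn T)) : Prop :=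
  [/\ uniq Rss, {subset Rss <= Rs} &
      forall R, R \in Rs -> (R \in Rss) (+) (- R \in Rss)].

(* Detailed balance (mass action).  Stated for every R in Rs; the equation
   for -R is the equation for R with both sides swapped, so this is the same
   as requiring it for R in Rs_s. *)
Definition detailed_balance (K : realType) (T : finType) (Rs : seq (rxn T))
  (k : rxn T -> K) : Prop :=
  exists Nb : T -> K, (forall i, 0 < Nb i) /\
    forall R, R \in Rs ->
      k R * \prod_(i in reactants R) Nb i ^ (- R i)
      = k (- R) * \prod_(i in products R) Nb i ^ (R i).

(* Energy: solution E of R^T E = w, w(R) = log (K_{-R} / K_R).  Row R of
   R^T E is sum_i R(i) E(i).  Stated for every R in Rs (the equation for -R
   is the negation of the one for R). *)
Definition energy (K : realType) (T : finType) (Rs : seq (rxn T))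
  (k : rxn T -> K) (E : T -> K) : Prop :=
  forall R, R \in Rs -> \sum_i (R i)%:~R * E i = ln (k (- R) / k R).

Definition Vtype (T : finType) (U : {set T}) := {x : T | x \notin U}.

Definition projV (T : finType) (U : {set T}) (R : rxn T) : rxn (Vtype U) :=
  [ffun v : Vtype U => R (val v)].

Definition red_rxns (T : finType) (U : {set T}) (Rs : seq (rxn T))
  : seq (rxn (Vtype U)) :=
  undup [seq projV U Rb | Rb <- Rs & projV U Rb != 0].

Definition red_rates (K : realType) (T : finType) (U : {set T})
  (Rs : seq (rxn T)) (k : rxn T -> K) (n : T -> K) (r : rxn (Vtype U)) : K :=
  \sum_(Rb <- Rs | projV U Rb == r)
     k Rb * \prod_(s in U :&: reactants Rb) n s ^ (- Rb s).

(* gamma is in the space of cycles C = ker R, where the columns of R are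
   the reactions of the representative sequence Rss. *)
Definition is_cycle (K : realType) (T : finType) (Rss : seq (rxn T))
  (g : 'I_(size Rss) -> K) : Prop :=
  forall i : T, \sum_(j < size Rss) ((nth 0 Rss j) i)%:~R * g j = 0.

(* i \in D(C_V): there is R in Rs such that pi_V R belongs to a cycle of
   C_V (i.e. pi_V R is, up to orientation, a column of R_V carrying a
   nonzero coefficient in some cycle) and R(i) != 0.  RVs is the chosen
   representative sequence (R_V)_s of the reduced network. *)
Definition in_D (K : realType) (T : finType) (U : {set T}) (Rs : seq (rxn T))
  (RVs : seq (rxn (Vtype U))) (i : T) : Prop :=
  exists2 R, R \in Rs &
    (exists g : 'I_(size RVs) -> K, exists j : 'I_(size RVs),
       [/\ @is_cycle K _ RVs g, g j != 0 &
           (projV U R == nth 0 RVs j) || (projV U R == - nth 0 RVs j)])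
    /\ R i != 0.

From HB Require Import structures.
From mathcomp Require Import all_boot all_order all_algebra.
From mathcomp Require Import reals sequences exp.

Set Implicit Arguments.
Unset Strict Implicit.
Unset Printing Implicit Defensive.

Import Order.TTheory GRing.Theory Num.Theory.
Local Open Scope ring_scope.

(* Detailed balance of a mass-action system means that K_R = K_{-R} e^<R,x>
   for one vector x (the logarithm of an equilibrium), and an energy E gives
   such an x = -E.  Freeze n_s = e^{x_s} on the substances of U that occur in
   reactions lifting a reaction of some cycle of the reduced network: then
   every summand of the reduced rate K[n_U](r) of such an r is e^<r, x_V>
   times the corresponding summand of K[n_U](-r).  Hence the vector
   log (K[n_U](r) / K[n_U](-r)) is orthogonal to the cycle space C_V, so by
   the Fredholm alternative it is <r, y> for some y, and e^y is an
   equilibrium of the reduced system. *)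

Lemma expRMzl (K : realType) (z : int) (x : K) : expR (z%:~R * x) = expR x ^ z.
Proof.
case: z => m; first by rewrite expRM_natl.
by rewrite NegzE mulrNz mulNr expRN expRM_natl exprnN.
Qed.

Lemma fredholm_alternative (F : fieldType) (m : nat) (J : finType)
    (a : 'I_m -> J -> F) (w : 'I_m -> F) :
  (forall g : 'I_m -> F, (forall j, \sum_i a i j * g i = 0) -> \sum_i g i * w i = 0) ->
  exists x : J -> F, forall i, \sum_j a i j * x j = w i.
Proof.
move=> w_orth.
pose A : 'M[F]_(#|J|, m) := \matrix_(c, i) a i (enum_val c).
pose wr : 'rV[F]_m := \row_i w i.
(* Each column of cokermx A is a g as in the hypothesis, so it kills wr. *)
have : (wr <= A)%MS.
  rewrite submxE; have := mulmx_coker A; move: (cokermx A) => C AC0.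
  apply/eqP/matrixP => r c; rewrite !mxE.
  have Cc_cycle : forall j, \sum_i a i j * C i c = 0.
    move=> j; have := congr1 (fun M : 'M[F]_(#|J|, m) => M (enum_rank j) c) AC0.
    rewrite !mxE => /(etrans _); apply; apply: eq_bigr => i _; by rewrite mxE enum_rankK.
  apply: etrans (w_orth _ Cc_cycle); apply: eq_bigr => i _; by rewrite mxE mulrC.
case/submxP => D wrDA.
exists (fun j => D 0 (enum_rank j)) => i.
have := congr1 (fun M : 'M[F]_(1, m) => M 0 i) wrDA; rewrite !mxE => ->.
rewrite (reindex (@enum_val _ (mem J))) /=; last first.
  by exists enum_rank => c _; rewrite ?enum_valK ?enum_rankK.
by apply: eq_bigr => c _; rewrite mxE enum_valK mulrC.
Qed.

Section Networks.
Variables (K : realType) (T : finType).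
Implicit Types (R : rxn T) (Rs : seq (rxn T)) (k : rxn T -> K) (x y : T -> K).

Definition pairing R x : K := \sum_i (R i)%:~R * x i.

Definition log_equilibrium Rs k x : Prop :=
  forall R, R \in Rs -> k R = k (- R) * expR (pairing R x).

Lemma pairingNl R x : pairing (- R) x = - pairing R x.
Proof. by rewrite /pairing -sumrN; apply: eq_bigr => i _; rewrite ffunE mulrNz mulNr. Qed.

Lemma pairingNr R x : pairing R (fun i => - x i) = - pairing R x.
Proof. by rewrite /pairing -sumrN; apply: eq_bigr => i _; rewrite mulrN. Qed.

Lemma sumrzN (A : {set T}) (z : T -> int) y :
  \sum_(i in A) (- z i)%:~R * y i = - \sum_(i in A) (z i)%:~R * y i.
Proof. by rewrite -sumrN; apply: eq_bigr => i _; rewrite mulrNz mulNr. Qed.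

Lemma prod_expRz (A : {set T}) (z : T -> int) x :
  \prod_(i in A) expR (x i) ^ z i = expR (\sum_(i in A) (z i)%:~R * x i).
Proof. by rewrite expR_sum; apply: eq_bigr => i _; rewrite expRMzl. Qed.

Lemma sum_reactants_products (S : {set T}) R y :
  \sum_(i in S) (R i)%:~R * y i =
  \sum_(i in S :&: reactants R) (R i)%:~R * y i +
  \sum_(i in S :&: products R) (R i)%:~R * y i.
Proof.
rewrite (bigID (fun i => R i < 0)) /=; congr (_ + _).
  by apply: eq_bigl => i; rewrite !inE.
rewrite (bigID (fun i => 0 < R i)) /= [X in _ + X]big1 ?addr0.
  by apply: eq_bigl => i; rewrite !inE; case: (ltrgt0P (R i)); rewrite ?andbT ?andbF.
by move=> i; case: (ltrgt0P (R i)) => [_|_|->]; rewrite ?andbF // mulr0z mul0r.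
Qed.

Lemma pairing_reactants_products R y :
  pairing R y =
  \sum_(i in reactants R) (R i)%:~R * y i + \sum_(i in products R) (R i)%:~R * y i.
Proof.
rewrite -[reactants R]setTI -[products R]setTI -sum_reactants_products.
by apply: eq_bigl => i; rewrite in_setT.
Qed.

Lemma mass_action_balanceE k R x :
  k R * \prod_(i in reactants R) expR (x i) ^ (- R i)
    = k (- R) * \prod_(i in products R) expR (x i) ^ (R i)
  <-> k R = k (- R) * expR (pairing R x).
Proof.
rewrite pairing_reactants_products !prod_expRz sumrzN.
set A := \sum_(i in reactants R) _; set B := \sum_(i in products R) _.
split=> [balance | ->].
  have -> : k R = k R * expR (- A) * expR A by rewrite -mulrA -expRD addNr expR0 mulr1.
  by rewrite balance -mulrA -expRD addrC.
by rewrite -mulrA -expRD addrAC subrr add0r.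
Qed.

Lemma detailed_balanceP Rs k :
  detailed_balance Rs k <-> exists x, log_equilibrium Rs k x.
Proof.
split=> [[Nb [Nb_gt0 balance]] | [x x_eq]].
  have lnNbK i : expR (ln (Nb i)) = Nb i by rewrite lnK // posrE.
  exists (fun i => ln (Nb i)) => R /balance balanceR; apply/mass_action_balanceE.
  by under eq_bigr do rewrite lnNbK; under [in RHS]eq_bigr do rewrite lnNbK.
exists (fun i => expR (x i)); split=> [i | R /x_eq]; first exact: expR_gt0.
by rewrite mass_action_balanceE.
Qed.

Lemma reactantsN R : reactants (- R) = products R.
Proof. by apply/setP => i; rewrite !inE ffunE oppr_lt0. Qed.

Lemma energy_log_equilibrium Rs k E :
  kinetic_system Rs k -> energy Rs k E -> log_equilibrium Rs k (fun i => - E i).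
Proof.
move=> [[_ _ RsN] k_gt0] E_energy R RsR.
have kR := k_gt0 R RsR; have kNR := k_gt0 _ (RsN R RsR).
rewrite pairingNr /pairing E_energy // expRN lnK ?posrE ?divr_gt0 // invf_div.
by rewrite mulrC divfK // lt0r_neq0.
Qed.

Lemma cycle_pairing_eq0 (Rss : seq (rxn T)) (g : 'I_(size Rss) -> K) y :
  is_cycle g -> \sum_j g j * pairing (nth 0 Rss j) y = 0.
Proof.
move=> g_cycle; under eq_bigr do rewrite mulr_sumr.
rewrite exchange_big big1 // => i _.
transitivity ((\sum_(j < size Rss) ((nth 0 Rss j) i)%:~R * g j) * y i).
  by rewrite mulr_suml; apply: eq_bigr => j _; rewrite mulrA [g j * _]mulrC.
by rewrite g_cycle mul0r.
Qed.

Lemma potential_of_cycle_orthogonal (Rss : seq (rxn T)) (w : 'I_(size Rss) -> K) :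
  (forall g, is_cycle g -> \sum_j g j * w j = 0) ->
  exists y, forall j : 'I_(size Rss), pairing (nth 0 Rss j) y = w j.
Proof. exact: (@fredholm_alternative _ _ _ (fun j i => ((nth 0 Rss j) i)%:~R)). Qed.

Lemma log_equilibrium_of_representatives Rs Rss k x :
  (forall R, R \in Rs -> - R \in Rs) -> (forall R, R \in Rs -> 0 < k R) ->
  representatives Rs Rss ->
  (forall R, R \in Rss -> pairing R x = ln (k R / k (- R))) ->
  log_equilibrium Rs k x.
Proof.
move=> RsN k_gt0 [_ _ Rss_rep] x_Rss R RsR.
have kR := k_gt0 R RsR; have kNR := k_gt0 _ (RsN R RsR).
suff -> : expR (pairing R x) = k R / k (- R) by rewrite mulrC divfK // lt0r_neq0.
have := Rss_rep R RsR; case: (boolP (R \in Rss)) => [/x_Rss -> _ | _ /= /x_Rss].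
  by rewrite lnK // posrE divr_gt0.
rewrite pairingNl opprK => /(canRL opprK) ->.
by rewrite expRN lnK ?posrE ?divr_gt0 // invf_div.
Qed.

End Networks.

Section Reduction.
Variables (K : realType) (T : finType) (U : {set T}) (Rs : seq (rxn T)).
Variables (k : rxn T -> K) (n : T -> K).
Implicit Types (R : rxn T) (r : rxn (Vtype U)) (x : T -> K).

Lemma projVN R : projV U (- R) = - projV U R.
Proof. by apply/ffunP => v; rewrite !ffunE. Qed.

Lemma mem_red_rxns r :
  r \in red_rxns U Rs <-> r != 0 /\ exists2 R, R \in Rs & projV U R = r.
Proof.
rewrite /red_rxns mem_undup; split=> [/mapP[R] | [r_neq0 [R RsR R_r]]].
  by rewrite mem_filter => /andP[R_neq0 RsR] ->; split=> //; exists R.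
by apply/mapP; exists R; rewrite ?mem_filter R_r ?r_neq0.
Qed.

Lemma red_rxnsN r :
  (forall R, R \in Rs -> - R \in Rs) -> r \in red_rxns U Rs -> - r \in red_rxns U Rs.
Proof.
move=> RsN /mem_red_rxns[r_neq0 [R RsR R_r]]; apply/mem_red_rxns.
by rewrite oppr_eq0; split=> //; exists (- R); rewrite ?RsN // projVN R_r.
Qed.

Definition red_rate_term R := k R * \prod_(s in U :&: reactants R) n s ^ (- R s).

Lemma red_ratesN r :
  uniq Rs -> (forall R, R \in Rs -> - R \in Rs) ->
  red_rates Rs k n (- r) = \sum_(R <- Rs | projV U R == r) red_rate_term (- R).
Proof.
move=> Rs_uniq RsN.
have Rs_permN : perm_eq Rs [seq - R | R <- Rs].
  apply: uniq_perm => //; first by rewrite map_inj_uniq //; exact: oppr_inj.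
  move=> R; apply/idP/mapP => [RsR | [R' RsR' ->]]; last exact: RsN.
  by exists (- R); rewrite ?opprK ?RsN.
by rewrite /red_rates (perm_big _ Rs_permN) big_map; apply: eq_bigl => R; rewrite projVN eqr_opp.
Qed.

Lemma red_rates_gt0 r :
  (forall R, R \in Rs -> 0 < k R) -> (forall s, s \in U -> 0 < n s) ->
  r \in red_rxns U Rs -> 0 < red_rates Rs k n r.
Proof.
move=> k_gt0 n_gt0 /mem_red_rxns[_ [R RsR R_r]].
have term_gt0 R' : R' \in Rs -> 0 < red_rate_term R'.
  move=> RsR'; rewrite mulr_gt0 ?k_gt0 // prodr_gt0 // => s.
  by rewrite inE => /andP[sU _]; exact/exprz_gt0/n_gt0.
rewrite /red_rates big_seq_cond (big_rem R) // RsR R_r eqxx /=.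
apply: lt_le_trans (term_gt0 R RsR) _; rewrite lerDl sumr_ge0 // => R'.
by case/andP=> RsR' _; exact/ltW/term_gt0.
Qed.

Lemma pairing_projV R x :
  pairing R x = \sum_(s in U) (R s)%:~R * x s + pairing (projV U R) (fun v => x (val v)).
Proof.
rewrite /pairing (bigID (mem U)) /=; congr (_ + _).
rewrite -[LHS]/(\sum_(s in [pred s | s \notin U]) (R s)%:~R * x s) big_sub.
by apply: eq_bigr => v _; rewrite ffunE.
Qed.

Lemma red_rate_term_balance R x :
  k R = k (- R) * expR (pairing R x) ->
  (forall s, s \in U -> R s != 0 -> n s = expR (x s)) ->
  red_rate_term R = red_rate_term (- R) * expR (pairing (projV U R) (fun v => x (val v))).
Proof.
move=> kR n_exp.
have n_reactants : \prod_(s in U :&: reactants R) n s ^ (- R s) =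
    expR (- \sum_(s in U :&: reactants R) (R s)%:~R * x s).
  rewrite -sumrzN -prod_expRz; apply: eq_bigr => s.
  by rewrite !inE => /andP[sU R_lt0]; rewrite n_exp // ltr0_neq0.
have n_products : \prod_(s in U :&: reactants (- R)) n s ^ (- (- R) s) =
    expR (\sum_(s in U :&: products R) (R s)%:~R * x s).
  rewrite reactantsN -prod_expRz; apply: eq_bigr => s.
  by rewrite !inE => /andP[sU R_gt0]; rewrite ffunE opprK n_exp // gt_eqF.
rewrite /red_rate_term n_reactants n_products kR pairing_projV.
rewrite (sum_reactants_products U) -!mulrA -!expRD; congr (_ * expR _).
move: (\sum_(s in U :&: reactants R) _) => A.
by rewrite [A + _]addrC addrAC addrK.
Qed.

Lemma red_rates_balance r x :
  uniq Rs -> (forall R, R \in Rs -> - R \in Rs) -> log_equilibrium Rs k x ->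
  (forall R, R \in Rs -> projV U R = r ->
     forall s, s \in U -> R s != 0 -> n s = expR (x s)) ->
  red_rates Rs k n r = red_rates Rs k n (- r) * expR (pairing r (fun v => x (val v))).
Proof.
move=> Rs_uniq RsN x_eq n_exp.
rewrite [in RHS](red_ratesN r) // mulr_suml /red_rates big_seq_cond [RHS]big_seq_cond.
apply: eq_bigr => R /andP[RsR /eqP R_r].
by rewrite -R_r; apply: red_rate_term_balance; [exact: x_eq | exact: n_exp].
Qed.

Theorem red_detailed_balance (RVs : seq (rxn (Vtype U))) x :
  kinetic_system Rs k -> (forall s, s \in U -> 0 < n s) ->
  representatives (red_rxns U Rs) RVs -> log_equilibrium Rs k x ->
  (forall s, s \in U -> in_D K Rs RVs s -> n s = expR (x s)) ->
  detailed_balance (red_rxns U Rs) (red_rates Rs k n).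
Proof.
move=> [[Rs_uniq _ RsN] k_gt0] n_gt0 RVs_rep x_eq n_D.
set KV := red_rates Rs k n.
have KV_gt0 := red_rates_gt0 k_gt0 n_gt0.
have RVs_red : {subset RVs <= red_rxns U Rs} by case: RVs_rep.
pose w (j : 'I_(size RVs)) := ln (KV (nth 0 RVs j) / KV (- nth 0 RVs j)).
have w_cycle_orth g : is_cycle g -> \sum_j g j * w j = 0.
  move=> g_cycle; apply: etrans (cycle_pairing_eq0 (fun v => x (val v)) g_cycle).
  apply: eq_bigr => j _; have [-> | gj_neq0] := eqVneq (g j) 0; first by rewrite !mul0r.
  have rj_red : nth 0 RVs j \in red_rxns U Rs by exact/RVs_red/mem_nth.
  rewrite /w /KV (red_rates_balance Rs_uniq RsN x_eq).
    by rewrite mulrAC divff ?mul1r ?expRK // lt0r_neq0 // KV_gt0 // red_rxnsN.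
  move=> R RsR R_rj s sU R_neq0; apply: n_D => //; exists R => //; split=> //.
  by exists g, j; rewrite R_rj eqxx.
have [y y_eq] := potential_of_cycle_orthogonal w_cycle_orth.
apply/detailed_balanceP; exists y.
apply: log_equilibrium_of_representatives RVs_rep _ => [r | r | r RVs_r];
  [exact: red_rxnsN | exact: KV_gt0 |].
have j_lt : (index r RVs < size RVs)%N by rewrite index_mem.
by have := y_eq (Ordinal j_lt); rewrite /w /= nth_index.
Qed.

End Reduction.

Theorem proposition5p1 (K : realType) (N : nat) (Rs : seq (rxn 'I_N))
  (k : rxn 'I_N -> K) (U : {set 'I_N}) (n : 'I_N -> K)
  (RVs : seq (rxn (Vtype U))) :
  kinetic_system Rs k -> detailed_balance Rs k ->
  U != set0 ->
  (forall s, s \in U -> 0 < n s) ->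
  representatives (red_rxns U Rs) RVs ->
  ((forall s, s \in U -> ~ @in_D K _ U Rs RVs s) ->
     detailed_balance (red_rxns U Rs) (red_rates Rs k n))
  /\
  (forall E : 'I_N -> K, energy Rs k E ->
     (exists2 s, s \in U & @in_D K _ U Rs RVs s) ->
     (forall s, s \in U -> @in_D K _ U Rs RVs s -> n s = expR (- E s)) ->
     detailed_balance (red_rxns U Rs) (red_rates Rs k n)).
Proof.
move=> kin balance _ n_gt0 RVs_rep; split=> [not_D | E E_energy _ n_D].
  have [x x_eq] := (detailed_balanceP Rs k).1 balance.
  by apply: (red_detailed_balance kin n_gt0 RVs_rep x_eq) => s sU /(not_D s sU).
exact: (red_detailed_balance kin n_gt0 RVs_rep (energy_log_equilibrium kin E_energy)).
Qed.
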